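(* Let $\Sigma$ be a finite alphabet and $C:\Sigma^k\to\Sigma^n$ a $(q,\delta,1,s)$-relaxed locally decodable code whose relaxed decoder is nonadaptive of the following form: for each $i\in[k]$ there is a distribution $\mathcal{Q}_i$ over $q$-element subsets of $[n]$ and for each $Q\in\mathrm{supp}(\mathcal{Q}_i)$ a function $f_{i,Q}:\Sigma^Q\to\Sigma\cup\{\bot\}$; on input $y$ and $i$ it samples $Q\sim\mathcal{Q}_i$ and outputs $f_{i,Q}(y|_Q)$. Fix $i\in[k]$ and a codeword $c=C(b)$. Let $c'\in\Sigma^n$ be the random word with $c'_j=c_j$ for $j\in L_i$ and $c'_j$ an independent uniformly random symbol of $\Sigma$ for $j\in H_i$. Then for every $(i,c)$-nonsmoothable query set $Q\in\mathrm{supp}(\mathcal{Q}_i)$, \[ \Pr_{c'}\bigl[f_{i,Q}(c'|_Q)\notin\{b_i,\bot\}\bigr]\ \ge\ |\Sigma|^{-|H(Q)|}\ \ge\ |\Sigma|^{-q}, \] where $H(Q):=Q\cap H_i$.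
   Context: $C$ is a $(q,\delta,1,s)$-RLDC if the decoder (outputs in $\Sigma\cup\{\bot\}$) satisfies, for all $b\in\Sigma^k$, $i\in[k]$, $y\in\Sigma^n$ with Hamming distance $\Delta(y,C(b))\le\delta n$: $\Pr[\mathsf{Dec}^{C(b)}(i)=b_i]=1$ and $\Pr[\mathsf{Dec}^y(i)\notin\{b_i,\bot\}]\le s$. $x|_S$ is the restriction of $x$ to coordinates in $S$. $p_i(j):=\Pr_{Q\sim\mathcal{Q}_i}[j\in Q]$, $H_i:=\{j:p_i(j)>q/(\delta n)\}$, $L_i:=[n]\setminus H_i$, $L(Q):=Q\cap L_i$. $Q$ is $(i,c)$-nonsmoothable if there exists $b'\in\Sigma^k$ with $C(b')|_{L(Q)}=c|_{L(Q)}$ and $b'_i\ne b_i$. *)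

From mathcomp Require Import all_boot all_order all_algebra.
Set Implicit Arguments. Unset Strict Implicit. Unset Printing Implicit Defensive.
Import Order.TTheory GRing.Theory Num.Theory.
Local Open Scope ring_scope.

Definition hamming (Sigma : finType) (n : nat) (x y : {ffun 'I_n -> Sigma}) : nat :=
  #|[set j | x j != y j]|.

(* Nonadaptive decoder: D i Q = probability that query set Q is sampled for
   index i (the distribution Q_i); f i Q y = f_{i,Q}(y|_Q), with None = bot. *)

Definition dec_prob (R : realFieldType) (Sigma : finType) (k n : nat)
  (D : 'I_k -> {set 'I_n} -> R)
  (f : 'I_k -> {set 'I_n} -> {ffun 'I_n -> Sigma} -> option Sigma)
  (y : {ffun 'I_n -> Sigma}) (i : 'I_k) (P : pred (option Sigma)) : R :=
  \sum_(Q : {set 'I_n}) D i Q * (P (f i Q y) : nat)%:R.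

Definition query_distr (R : realFieldType) (k n q : nat)
  (D : 'I_k -> {set 'I_n} -> R) : Prop :=
  forall i : 'I_k,
    [/\ forall Q, 0 <= D i Q,
        \sum_(Q : {set 'I_n}) D i Q = 1
      & forall Q, 0 < D i Q -> #|Q| = q].

Definition local_fun (R : realFieldType) (Sigma : finType) (k n : nat)
  (D : 'I_k -> {set 'I_n} -> R)
  (f : 'I_k -> {set 'I_n} -> {ffun 'I_n -> Sigma} -> option Sigma) : Prop :=
  forall i Q, 0 < D i Q ->
    forall y y' : {ffun 'I_n -> Sigma},
      (forall j, j \in Q -> y j = y' j) -> f i Q y = f i Q y'.

Definition is_RLDC (R : realFieldType) (Sigma : finType) (k n q : nat)
  (delta s : R) (C : {ffun 'I_k -> Sigma} -> {ffun 'I_n -> Sigma})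
  (D : 'I_k -> {set 'I_n} -> R)
  (f : 'I_k -> {set 'I_n} -> {ffun 'I_n -> Sigma} -> option Sigma) : Prop :=
  [/\ query_distr q D,
      local_fun D f,
      (forall b i, dec_prob D f (C b) i (pred1 (Some (b i))) = 1)
    & (forall b i y, (hamming y (C b))%:R <= delta * n%:R ->
         dec_prob D f y i (fun o => o \notin [:: Some (b i); None]) <= s)].

Definition pmass (R : realFieldType) (k n : nat) (D : 'I_k -> {set 'I_n} -> R)
  (i : 'I_k) (j : 'I_n) : R :=
  \sum_(Q : {set 'I_n} | j \in Q) D i Q.

Definition Hset (R : realFieldType) (k n q : nat) (delta : R)
  (D : 'I_k -> {set 'I_n} -> R) (i : 'I_k) : {set 'I_n} :=
  [set j | q%:R / (delta * n%:R) < pmass D i j].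

Definition Lset (R : realFieldType) (k n q : nat) (delta : R)
  (D : 'I_k -> {set 'I_n} -> R) (i : 'I_k) : {set 'I_n} :=
  ~: Hset q delta D i.

Definition nonsmoothable (R : realFieldType) (Sigma : finType) (k n q : nat)
  (delta : R) (C : {ffun 'I_k -> Sigma} -> {ffun 'I_n -> Sigma})
  (D : 'I_k -> {set 'I_n} -> R) (i : 'I_k) (b : {ffun 'I_k -> Sigma})
  (Q : {set 'I_n}) : Prop :=
  exists b' : {ffun 'I_k -> Sigma},
    (forall j, j \in Q :&: Lset q delta D i -> C b' j = C b j) /\ b' i != b i.

(* Pr_{c'}[P c'] where c' agrees with c on L_i and is independent uniform on H_i:
   uniform distribution over the words agreeing with c on L_i. *)
Definition prob_cprime (R : realFieldType) (Sigma : finType) (n : nat)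
  (L : {set 'I_n}) (c : {ffun 'I_n -> Sigma}) (P : pred {ffun 'I_n -> Sigma}) : R :=
  (#|[set y : {ffun 'I_n -> Sigma} | [forall j in L, y j == c j] && P y]|%:R)
  / (#|[set y : {ffun 'I_n -> Sigma} | [forall j in L, y j == c j]]|%:R).
Arguments prob_cprime R [Sigma n] L c P.

(* On the positions of L_i, the random word c' coincides with C b, hence with
   C b' on L(Q).  With probability |Sigma|^-|H(Q)| the independent symbols on
   H(Q) also coincide with C b', and then c'|_Q = C(b')|_Q.  By perfect
   completeness f_{i,Q} answers b'_i <> b_i on C(b'), so it errs on c'. *)
From mathcomp Require Import all_boot all_order all_algebra.
Set Implicit Arguments. Unset Strict Implicit. Unset Printing Implicit Defensive.
Import Order.TTheory GRing.Theory Num.Theory.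
Local Open Scope ring_scope.

Lemma dec_prob_eq1_supp (R : realFieldType) (Sigma : finType) (k n q : nat)
    (D : 'I_k -> {set 'I_n} -> R)
    (f : 'I_k -> {set 'I_n} -> {ffun 'I_n -> Sigma} -> option Sigma)
    (y : {ffun 'I_n -> Sigma}) (i : 'I_k) (P : pred (option Sigma))
    (Q : {set 'I_n}) :
  query_distr q D -> dec_prob D f y i P = 1 -> 0 < D i Q -> P (f i Q y).
Proof.
rewrite /dec_prob => /(_ i) [D_ge0 D_sum1 _] Pr1 DQ_gt0.
pose miss Q0 := D i Q0 * (1 - (P (f i Q0 y) : nat)%:R).
have miss_ge0 Q0 : true -> 0 <= miss Q0.
  by move=> _; rewrite /miss; case: (P _); rewrite ?subrr ?subr0 ?mulr0 ?mulr1.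
have miss_sum0 : \sum_Q0 miss Q0 = 0.
  by rewrite /miss; under eq_bigr do rewrite mulrBr mulr1; rewrite sumrB D_sum1 Pr1 subrr.
have := psumr_eq0P miss_ge0 miss_sum0 (i := Q) isT.
by rewrite /miss; case: (P _) => //; rewrite subr0 mulr1 => DQ0; rewrite DQ0 ltxx in DQ_gt0.
Qed.

Section AgreeingWords.

Variables (T Sigma : finType).

Definition agree_on (L : {set T}) (c : {ffun T -> Sigma}) :
    {set {ffun T -> Sigma}} :=
  [set y : {ffun T -> Sigma} | [forall j in L, y j == c j]].

Lemma card_agree_on_gt0 (L : {set T}) (c : {ffun T -> Sigma}) :
  (0 < #|agree_on L c|)%N.
Proof. by apply/card_gt0P; exists c; rewrite inE; apply/forall_inP. Qed.

Lemma agree_on_glue (H Q : {set T}) (c c' : {ffun T -> Sigma}) :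
    {in Q :&: ~: H, c' =1 c} ->
  agree_on (~: H) c :&: agree_on (Q :&: H) c' \subset agree_on Q c'.
Proof.
move=> eq_c'c; apply/subsetP => y /setIP [/[!inE] /forall_inP yL /forall_inP yQH].
apply/forall_inP => j jQ; have [jH | jL] := boolP (j \in H).
  by apply: yQH; rewrite inE jQ.
have jQL : j \in Q :&: ~: H by rewrite !inE jQ.
by rewrite (eqP (yL j _)) ?eq_c'c //; case/setIP: jQL.
Qed.

(* Overwriting the A-positions with c' and remembering the erased symbols
   separately is injective. *)
Lemma card_agree_on_le (L A : {set T}) (c c' : {ffun T -> Sigma}) :
    [disjoint A & L] ->
  (#|agree_on L c| <= #|agree_on L c :&: agree_on A c'| * #|Sigma| ^ #|A|)%N.
Proof.
move=> disAL.
pose F (y : {ffun T -> Sigma}) :=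
  ([ffun j => if j \in A then c' j else y j],
   [ffun x : {j | j \in A} => y (val x)]).
have F_inj : injective F.
  move=> y1 y2 [/ffunP eq_out /ffunP eq_in]; apply/ffunP => j.
  have [jA | jA] := boolP (j \in A).
    by have := eq_in (Sub j jA); rewrite !ffunE.
  by have := eq_out j; rewrite !ffunE (negbTE jA).
have card_erased : #|[set: {ffun {j | j \in A} -> Sigma}]| = (#|Sigma| ^ #|A|)%N.
  by rewrite cardsT card_ffun card_sig.
rewrite -(card_imset _ F_inj) -card_erased -cardsX.
apply/subset_leq_card/subsetP => _ /imsetP [y yL ->].
rewrite !inE andbT; move: yL; rewrite inE => /forall_inP yL.
apply/andP; split; apply/forall_inP => j jX; rewrite ffunE.
  by rewrite (disjointFl disAL jX) yL.
by rewrite jX.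
Qed.

End AgreeingWords.

Section RandomCompletion.

Variables (R : realFieldType) (Sigma : finType) (n : nat).

Lemma prob_cprimeE (L : {set 'I_n}) (c : {ffun 'I_n -> Sigma})
    (P : pred {ffun 'I_n -> Sigma}) :
  prob_cprime R L c P =
    #|agree_on L c :&: [set y | P y]|%:R / #|agree_on L c|%:R.
Proof. by congr (_%:R / _%:R); apply: eq_card => y; rewrite !inE. Qed.

Lemma prob_cprime_ge (L A : {set 'I_n})
    (c c' : {ffun 'I_n -> Sigma}) (P : pred {ffun 'I_n -> Sigma}) :
    [disjoint A & L] ->
    {subset agree_on L c :&: agree_on A c' <= P} ->
  #|Sigma|%:R ^- #|A| <= prob_cprime R L c P.
Proof.
move=> disAL forceP; rewrite prob_cprimeE ler_pdivlMr ?ltr0n ?card_agree_on_gt0 //.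
apply: (le_trans (y := #|Sigma|%:R ^- #|A| *
    (#|agree_on L c :&: agree_on A c'|%:R * #|Sigma|%:R ^+ #|A|))).
  by rewrite ler_wpM2l ?invr_ge0 ?exprn_ge0 // -natrX -natrM ler_nat card_agree_on_le.
have [-> | nz] := eqVneq (#|Sigma|%:R ^+ #|A| : R) 0.
  by rewrite invr0 mul0r.
rewrite mulrC -mulrA mulfV // mulr1 ler_nat subset_leq_card //.
apply/subsetP => y yLA; apply/setIP; split; first by case/setIP: yLA.
by rewrite inE; apply: forceP.
Qed.

End RandomCompletion.

Lemma exprVn_le (R : numFieldType) (x : R) (m n : nat) :
  1 <= x -> (m <= n)%N -> x ^- n <= x ^- m.
Proof.
move=> x_ge1 le_mn; have x_gt0 : 0 < x := lt_le_trans ltr01 x_ge1.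
rewrite -!exprVn; apply: ler_wiXn2l le_mn; [by rewrite invr_ge0 ltW | by rewrite invf_le1].
Qed.

Theorem mainTheorem4 (R : realFieldType) (Sigma : finType) (k n q : nat)
  (delta s : R) (C : {ffun 'I_k -> Sigma} -> {ffun 'I_n -> Sigma})
  (D : 'I_k -> {set 'I_n} -> R)
  (f : 'I_k -> {set 'I_n} -> {ffun 'I_n -> Sigma} -> option Sigma) :
  is_RLDC q delta s C D f ->
  forall (i : 'I_k) (b : {ffun 'I_k -> Sigma}) (Q : {set 'I_n}),
    0 < D i Q ->
    nonsmoothable q delta C D i b Q ->
    (#|Sigma|%:R ^- #|Q :&: Hset q delta D i|
       <= prob_cprime R (Lset q delta D i) (C b)
                    (fun y => f i Q y \notin [:: Some (b i); None]))
    /\ (#|Sigma|%:R ^- q <= (#|Sigma|%:R : R) ^- #|Q :&: Hset q delta D i|).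
Proof.
move=> [distrD localf complete _] i b Q DQ_gt0 [b' [agree_b' neq_b']].
rewrite /Lset; set H := Hset q delta D i.
have f_Cb' : f i Q (C b') = Some (b' i).
  exact/eqP/(dec_prob_eq1_supp distrD (complete b' i) DQ_gt0).
split.
  apply: prob_cprime_ge; first by rewrite -subsets_disjoint subsetIr.
  move=> y /(subsetP (agree_on_glue agree_b')) /[!inE] /forall_inP yQ.
  rewrite unfold_in /= (localf _ _ DQ_gt0 y (C b')) => [|j /yQ /eqP //].
  by rewrite f_Cb' !inE orbF; apply: contra neq_b' => /eqP [->].
apply: exprVn_le; first by rewrite ler1n; apply/card_gt0P; exists (b i).
by have [_ _ /(_ Q DQ_gt0) <-] := distrD i; rewrite subset_leq_card ?subsetIl.
Qed.
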